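(* Let $\mathcal{L}$ be a regular linear space of real symmetric $n\times n$ matrices whose ML degree is $0$. Then $\mathcal{L}$ has empty intersection with the interior of the cone of positive semidefinite matrices (i.e. $\mathcal{L}$ contains no positive definite matrix).
   Context: For a linear subspace $\mathcal{L}$ of symmetric matrices (its ML degree being that of its complex span in $\mathbb{S}^n$, the space of complex symmetric $n\times n$ matrices): $\mathcal{L}$ is regular if it contains a full-rank matrix; $\mathcal{L}^\perp=\{\Sigma\in\mathbb{S}^n:\mathrm{tr}(K\Sigma)=0\ \forall K\in\mathcal{L}\}$; the reciprocal variety $\mathcal{L}^{-1}$ is the Zariski closure of the set of inverses of invertible matrices in $\mathcal{L}$; the ML degree is the number of matrices in $\mathcal{L}^{-1}\cap(\mathcal{L}^\perp+S)$ for generic $S\in\mathbb{S}^n$. *)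

From HB Require Import structures.
From mathcomp Require Import all_boot all_order all_algebra.
From mathcomp Require Import reals complex.
From mathcomp Require mpoly.

Set Implicit Arguments.
Unset Strict Implicit.
Unset Printing Implicit Defensive.

Import Order.TTheory GRing.Theory Num.Theory.
Local Open Scope ring_scope.

Section MLDefs.
Variables (R : realType) (n d : nat).
Local Notation C := (R[i]).

(* The real linear space L is the row space of B, matrices being encoded
   as row vectors through mxvec. *)
Definition inL (B : 'M[R]_(d, n * n)) (K : 'M[R]_n) : bool :=
  (mxvec K <= B)%MS.

Definition inLC (B : 'M[R]_(d, n * n)) (K : 'M[C]_n) : bool :=
  (mxvec K <= map_mx (@real_complex R) B)%MS.

Definition sym_space (B : 'M[R]_(d, n * n)) : Prop :=
  forall K : 'M[R]_n, inL B K -> K^T = K.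

Definition regular (B : 'M[R]_(d, n * n)) : Prop :=
  exists K : 'M[R]_n, inL B K /\ K \in unitmx.

Definition Lperp (B : 'M[R]_(d, n * n)) (S : 'M[C]_n) : Prop :=
  S^T = S /\ forall K : 'M[C]_n, inLC B K -> \tr (K *m S) = 0.

Definition mx_eval (p : mpoly.mpoly (n * n) C) (A : 'M[C]_n) : C :=
  mpoly.meval (fun i => mxvec A 0 i) p.

Definition zariski_closure (E : 'M[C]_n -> Prop) (X : 'M[C]_n) : Prop :=
  forall p : mpoly.mpoly (n * n) C,
    (forall Y, E Y -> mx_eval p Y = 0) -> mx_eval p X = 0.

Definition recip_variety (B : 'M[R]_(d, n * n)) : 'M[C]_n -> Prop :=
  zariski_closure (fun Y => exists K : 'M[C]_n,
                      [/\ inLC B K, K \in unitmx & Y = invmx K]).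

Definition ML_set (B : 'M[R]_(d, n * n)) (S X : 'M[C]_n) : Prop :=
  recip_variety B X /\ exists Sig : 'M[C]_n, Lperp B Sig /\ X = Sig + S.

(* "The ML degree of L is m": for generic S in S^n (i.e. S outside the zero
   set of some polynomial not vanishing identically on S^n), the set
   L^{-1} \cap (L^perp + S) consists of exactly m matrices. *)
Definition ML_degree_is (B : 'M[R]_(d, n * n)) (m : nat) : Prop :=
  exists p : mpoly.mpoly (n * n) C,
    (exists S0 : 'M[C]_n, S0^T = S0 /\ mx_eval p S0 != 0) /\
    forall S : 'M[C]_n, S^T = S -> mx_eval p S != 0 ->
      exists s : seq 'M[C]_n,
        [/\ uniq s, size s = m & forall X, ML_set B S X <-> X \in s].

Definition posdef (K : 'M[R]_n) : Prop :=
  forall v : 'cV[R]_n, v != 0 -> 0 < (v^T *m K *m v) 0 0.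

End MLDefs.

From HB Require Import structures.
From mathcomp Require Import all_boot all_order all_algebra.
From mathcomp Require Import reals complex.
From mathcomp Require Import mpoly.
From mathcomp Require Import ring.

Set Implicit Arguments.
Unset Strict Implicit.
Unset Printing Implicit Defensive.

Import Order.TTheory GRing.Theory Num.Theory.
Local Open Scope ring_scope.

(* Suppose L contains a positive definite K0 and put M = K0^-1.  Along the line
   S(t) = M + t (S0 - M) through a generic S0 we solve the ML equations by power
   series: since tr (X M X M) > 0 for every nonzero symmetric X in L, the
   linearization at t = 0 is invertible, and Hensel lifting yields polynomial
   matrices P(t) with coefficients in L and Sigma(t) with P Sigma = 1 and
   S - Sigma in L^perp modulo t^m.  Wherever P(z) is invertible, P(z)^-1 is then
   an ML solution for the symmetric data P(z)^-1 + (S - Sigma)(z) (truncated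
   below degree m), so ML degree 0 forces the generic polynomial p to vanish
   there.  Clearing denominators with det P gives t^m | (det P)^N p(S(t)); as
   det P(0) = det K0 <> 0, t^m | p(S(t)) for all m, whereas p(S(1)) = p(S0) <> 0. *)

Section PolyCongruence.
Variables (F : fieldType) (d : {poly F}).

Definition congp (a b : {poly F}) := d %| a - b.

Lemma congpxx a : congp a a.
Proof. by rewrite /congp subrr dvdp0. Qed.

Lemma congpD a b c e : congp a b -> congp c e -> congp (a + c) (b + e).
Proof. by move=> ab ce; rewrite /congp opprD addrACA dvdp_add. Qed.

Lemma congpM a b c e : congp a b -> congp c e -> congp (a * c) (b * e).
Proof.
rewrite /congp => ab ce; have -> : a * c - b * e = a * (c - e) + (a - b) * e by ring.
by apply: dvdp_add; [apply: dvdp_mull | apply: dvdp_mulr].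
Qed.

Lemma congpX a b k : congp a b -> congp (a ^+ k) (b ^+ k).
Proof. by move=> ab; elim: k => [|k IHk]; rewrite ?congpxx // !exprS congpM. Qed.

Lemma congp_sum (I : Type) (r : seq I) (P : pred I) (G H : I -> {poly F}) :
  (forall i, P i -> congp (G i) (H i)) ->
  congp (\sum_(i <- r | P i) G i) (\sum_(i <- r | P i) H i).
Proof. by move=> GH; apply: (big_ind2 congp); [exact: congpxx | exact: congpD |]. Qed.

Lemma congp_prod (I : Type) (r : seq I) (P : pred I) (G H : I -> {poly F}) :
  (forall i, P i -> congp (G i) (H i)) ->
  congp (\prod_(i <- r | P i) G i) (\prod_(i <- r | P i) H i).
Proof. by move=> GH; apply: (big_ind2 congp); [exact: congpxx | exact: congpM |]. Qed.

End PolyCongruence.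

Section HomogeneousEval.
Variables (k : nat) (F : comNzRingType).

(* This is [t ^+ N * meval (fun i => x i / t) p] written without division, so
   that [t] may be a polynomial: it clears the denominators of [p] at [x / t]. *)
Definition mhomog_eval (A : comNzRingType) (f : {rmorphism F -> A}) N
    (p : {mpoly F[k]}) (t : A) (x : 'I_k -> A) : A :=
  \sum_(m <- msupp p) f p@_m * (t ^+ (N - mdeg m) * \prod_(i < k) x i ^+ m i).

Variables (A : comNzRingType) (f : {rmorphism F -> A}).

Lemma eq_mhomog_eval N p t x y : x =1 y ->
  mhomog_eval f N p t x = mhomog_eval f N p t y.
Proof. by move=> xy; apply: eq_bigr => m _; under eq_bigr do rewrite xy. Qed.

Lemma mhomog_eval_scale N p t x : (msize p <= N)%N ->
  mhomog_eval f N p t (fun i => t * x i) = t ^+ N * mhomog_eval f N p 1 x.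
Proof.
move=> pN; rewrite /mhomog_eval mulr_sumr; apply: eq_big_seq => m pm.
have mN : (mdeg m <= N)%N by apply: leq_trans (ltnW (msize_mdeg_lt pm)) pN.
under eq_bigr do rewrite exprMn.
rewrite big_split /= prodrXr -mdegE expr1n mul1r [t ^+ _ * _]mulrA -exprD.
by rewrite subnK // mulrCA.
Qed.

End HomogeneousEval.

Lemma mhomog_eval1 k (F : comNzRingType) N (p : {mpoly F[k]}) x :
  mhomog_eval (idfun : {rmorphism F -> F}) N p 1 x = meval x p.
Proof. by rewrite mevalE; apply: eq_bigr => m _; rewrite expr1n mul1r. Qed.

Lemma horner_mhomog_eval k (F : comNzRingType) N (p : {mpoly F[k]}) t x z :
  (mhomog_eval (polyC : {rmorphism F -> {poly F}}) N p t x).[z] =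
  mhomog_eval (idfun : {rmorphism F -> F}) N p t.[z] (fun i => (x i).[z]).
Proof.
rewrite /mhomog_eval horner_sum; apply: eq_bigr => m _.
rewrite hornerM hornerC hornerM horner_exp horner_prod.
by under eq_bigr do rewrite horner_exp.
Qed.

Lemma congp_mhomog_eval k (F : fieldType) (d : {poly F}) N (p : {mpoly F[k]}) t x y :
  (forall i, congp d (x i) (y i)) ->
  congp d (mhomog_eval (polyC : {rmorphism F -> {poly F}}) N p t x)
          (mhomog_eval (polyC : {rmorphism F -> {poly F}}) N p t y).
Proof.
move=> xy; apply: congp_sum => m _; apply: congpM; first exact: congpxx.
apply: congpM; first exact: congpxx.
by apply: congp_prod => i _; apply: congpX.
Qed.

Lemma poly_horner_eq0 (F : numDomainType) (q : {poly F}) :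
  (forall z, q.[z] = 0) -> q = 0.
Proof.
move=> q0; apply/eqP; apply: contraT => qn0.
set s := [seq i%:R : F | i <- iota 0 (size q)].
have s_roots : all (root q) s by apply/allP => _ /mapP [i _ ->]; rewrite /root q0.
have s_uniq : uniq s.
  by rewrite map_inj_uniq ?iota_uniq // => i j /eqP; rewrite eqr_nat => /eqP.
by have := max_poly_roots qn0 s_roots s_uniq; rewrite size_map size_iota ltnn.
Qed.

Section PolyMatrixCoef.
Variables (F : nzRingType) (p q r : nat).

Lemma polymxP (P Q : 'M[{poly F}]_(p, q)) :
  (forall j, map_mx (coefp j) P = map_mx (coefp j) Q) -> P = Q.
Proof.
move=> PQ; apply/matrixP => i k; apply/polyP => j.
by have := congr1 (fun A : 'M[F]_(p, q) => A i k) (PQ j); rewrite !mxE.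
Qed.

Lemma coefmx_mul_const j (Q : 'M[{poly F}]_(p, q)) (A : 'M[F]_(q, r)) :
  map_mx (coefp j) (Q *m map_mx polyC A) = map_mx (coefp j) Q *m A.
Proof.
apply/matrixP => i k; rewrite !mxE /= coef_sum; apply: eq_bigr => l _.
by rewrite !mxE coefMC.
Qed.

Lemma coefmx_const_mul j (A : 'M[F]_(p, q)) (Q : 'M[{poly F}]_(q, r)) :
  map_mx (coefp j) (map_mx polyC A *m Q) = A *m map_mx (coefp j) Q.
Proof.
apply/matrixP => i k; rewrite !mxE /= coef_sum; apply: eq_bigr => l _.
by rewrite !mxE coefCM.
Qed.

Lemma coef_mxtrace j (Q : 'M[{poly F}]_p) : (\tr Q)`_j = \tr (map_mx (coefp j) Q).
Proof. by rewrite coef_sum; apply: eq_bigr => i _; rewrite mxE. Qed.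

End PolyMatrixCoef.

Section PolyMatrix.
Variables (F : fieldType) (n : nat).
Implicit Types (d e q : {poly F}) (A : 'M[F]_n) (P Q : 'M[{poly F}]_n).

Definition dvdpmx d P := forall i j, d %| P i j.

Lemma dvdpmx0 d : dvdpmx d 0.
Proof. by move=> i j; rewrite mxE dvdp0. Qed.

Lemma dvdpmxD d P Q : dvdpmx d P -> dvdpmx d Q -> dvdpmx d (P + Q).
Proof. by move=> dP dQ i j; rewrite mxE dvdp_add. Qed.

Lemma dvdpmxN d P : dvdpmx d P -> dvdpmx d (- P).
Proof. by move=> dP i j; rewrite mxE dvdpNr. Qed.

Lemma dvdpmxZ d q P : dvdpmx d P -> dvdpmx d (q *: P).
Proof. by move=> dP i j; rewrite mxE dvdp_mull. Qed.

Lemma dvdpmx_mull d P Q : dvdpmx d Q -> dvdpmx d (P *m Q).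
Proof.
move=> dQ i j; rewrite mxE; apply: (big_ind (dvdp d)); rewrite ?dvdp0 //.
  exact: dvdp_add.
by move=> k _; apply: dvdp_mull.
Qed.

Lemma dvdpmx_trans d e P : d %| e -> dvdpmx e P -> dvdpmx d P.
Proof. by move=> de eP i j; apply: dvdp_trans (eP i j). Qed.

Lemma dvdpmx_scale d e Q : dvdpmx e Q -> dvdpmx (d * e) (d *: Q).
Proof. by move=> eQ i j; rewrite mxE dvdp_mul. Qed.

Lemma dvdpmx_scalel d Q : dvdpmx d (d *: Q).
Proof. by move=> i j; rewrite mxE dvdp_mulr. Qed.

Lemma dvdpmx_divp d P : dvdpmx d P -> P = d *: map_mx (fun q => q %/ d) P.
Proof. by move=> dP; apply/matrixP => i j; rewrite !mxE mulrC divpK. Qed.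

Lemma dvdpmxXP Q : dvdpmx 'X Q <-> map_mx (coefp 0) Q = 0.
Proof.
rewrite -[X in dvdpmx X](subr0 'X) -polyC0; split => [XQ | Q0 i j].
  apply/matrixP => i j; have := XQ i j.
  by rewrite dvdp_XsubCl /root horner_coef0 !mxE => /eqP.
rewrite dvdp_XsubCl /root horner_coef0.
by have := congr1 (fun A => A i j) Q0; rewrite !mxE /= => ->.
Qed.

Lemma dvdpmx_take_poly m P : dvdpmx ('X^m) (P - map_mx (take_poly m) P).
Proof.
move=> i j; rewrite !mxE -{1}(poly_take_drop m (P i j)) addrAC subrr add0r.
exact: dvdp_mull.
Qed.

Lemma dvdpmx_mxvec d P k : dvdpmx d P -> d %| mxvec P 0 k.
Proof. by move=> dP; case/mxvec_indexP: k => i j; rewrite mxvecE. Qed.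

Lemma coefmx_const j A :
  map_mx (coefp j) (map_mx polyC A) = if j == 0%N then A else 0.
Proof. by apply/matrixP => i k; rewrite !mxE /= coefC; case: eqP; rewrite ?mxE. Qed.

Lemma coefmx0_const A : map_mx (coefp 0) (map_mx polyC A) = A.
Proof. by rewrite coefmx_const. Qed.

Lemma coefmx_take_poly j m P : map_mx (coefp j) (map_mx (take_poly m) P) =
  if (j < m)%N then map_mx (coefp j) P else 0.
Proof.
by apply/matrixP => i k; rewrite !mxE /= coef_take_poly; case: ifP; rewrite ?mxE.
Qed.

Lemma coefmx_XnZ j m Q : map_mx (coefp j) ('X^m *: Q) =
  if (j < m)%N then 0 else map_mx (coefp (j - m)) Q.
Proof. by apply/matrixP => i k; rewrite !mxE /= coefXnM; case: ifP; rewrite ?mxE. Qed.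

Lemma horner_evalmx_const z A : map_mx (horner_eval z) (map_mx polyC A) = A.
Proof. by apply/matrixP => i k; rewrite !mxE horner_evalE hornerC. Qed.

Lemma horner_evalmxZ z q P :
  map_mx (horner_eval z) (q *: P) = q.[z] *: map_mx (horner_eval z) P.
Proof. by apply/matrixP => i k; rewrite !mxE !horner_evalE hornerM. Qed.

Lemma polymx_sym P :
  (forall j, (map_mx (coefp j) P)^T = map_mx (coefp j) P) -> P^T = P.
Proof. by move=> Psym; apply: polymxP => j; rewrite -map_trmx Psym. Qed.

End PolyMatrix.

Lemma trmx11 (T : Type) (x : 'M[T]_1) : x^T = x.
Proof. by apply/matrixP => i j; rewrite !ord1 mxE. Qed.

Lemma mulmx_row_col (T : pzSemiRingType) m n p
    (A : 'M[T]_(m, n)) (B : 'M[T]_(n, p)) i j :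
  (row i A *m col j B) 0 0 = (A *m B) i j.
Proof. by rewrite !mxE; apply: eq_bigr => k _; rewrite !mxE. Qed.

Lemma symmx_form_split (T : comPzRingType) n (j : T) (S : 'M[T]_n) (u w : 'rV[T]_n) :
  j * j = -1 -> S^T = S ->
  (u + j *: w) *m S *m (u - j *: w)^T = u *m S *m u^T + w *m S *m w^T.
Proof.
move=> jj Ssym.
have cross : w *m S *m u^T = u *m S *m w^T.
  by rewrite -[RHS]trmx11 !trmx_mul trmxK Ssym mulmxA.
rewrite linearB linearZ /= mulmxDl -scalemxAl !mulmxDl !mulmxBr -!scalemxAl -!scalemxAr.
by rewrite scalerA jj scaleN1r opprK cross -addrA addKr.
Qed.

Section HermitianTrace.
Variables (C : numClosedFieldType) (n : nat).
Local Open Scope sesquilinear_scope.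

Lemma mxtrace_diag_hermitian (s : 'rV[C]_n) (Y : 'M[C]_n) : Y^t* = Y ->
  \tr (diag_mx s *m Y *m diag_mx s *m Y) =
  \sum_i \sum_j s 0 i * s 0 j * (Y i j * (Y i j)^*).
Proof.
move=> YH; rewrite mul_diag_mx mul_mx_diag; apply: eq_bigr => i _.
rewrite mxE; apply: eq_bigr => j _.
have Yji : Y j i = (Y i j)^* by rewrite -[in LHS]YH !mxE.
by rewrite !mxE Yji; ring.
Qed.

Lemma hermitian_diag_trace_eq0 (s : 'rV[C]_n) (Y : 'M[C]_n) :
  (forall i, 0 < s 0 i) -> Y^t* = Y ->
  \tr (diag_mx s *m Y *m diag_mx s *m Y) = 0 -> Y = 0.
Proof.
move=> s_gt0 YH; rewrite mxtrace_diag_hermitian // => tr0.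
have term_ge0 i j : 0 <= s 0 i * s 0 j * (Y i j * (Y i j)^*).
  by rewrite mulr_ge0 ?mul_conjC_ge0 // mulr_ge0 // ltW.
apply/matrixP => i j; rewrite mxE.
have row0 k : \sum_l s 0 k * s 0 l * (Y k l * (Y k l)^*) = 0.
  exact: (psumr_eq0P (fun k _ => sumr_ge0 _ (fun l _ => term_ge0 k l)) tr0 (i := k)).
have /eqP := psumr_eq0P (fun l _ => term_ge0 i l) (row0 i) (i := j) isT.
by rewrite mulf_eq0 mul_conjC_eq0 mulf_eq0 (gt_eqF (s_gt0 i)) (gt_eqF (s_gt0 j)) => /eqP.
Qed.

End HermitianTrace.

Section PositiveDefinite.
Variables (R : realType) (n : nat).
Local Notation rc := (real_complex R).
Local Open Scope sesquilinear_scope.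

Lemma posdef_row_gt0 (M : 'M[R]_n) (a : 'rV_n) :
  posdef M -> a != 0 -> 0 < (a *m M *m a^T) 0 0.
Proof. by move=> Mpd a0; have := Mpd a^T; rewrite trmxK trmx_eq0; apply. Qed.

Lemma posdef_row_ge0 (M : 'M[R]_n) (a : 'rV_n) :
  posdef M -> 0 <= (a *m M *m a^T) 0 0.
Proof.
move=> Mpd; have [->|/(posdef_row_gt0 Mpd)/ltW //] := eqVneq a 0.
by rewrite !mul0mx mxE.
Qed.

Lemma posdef_unitmx (K : 'M[R]_n) : posdef K -> K \in unitmx.
Proof.
move=> Kpd; apply: contraT => Kunit.
have : kermx K^T != 0 by rewrite kermx_eq0 row_free_unit unitmx_tr.
case/rowV0Pn => u /sub_kermxP uK u0.
have := posdef_row_gt0 Kpd u0.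
by rewrite -mulmxA -[K]trmxK -trmx_mul uK trmx0 mulmx0 mxE ltxx.
Qed.

Lemma posdef_invmx (K : 'M[R]_n) : K^T = K -> posdef K -> posdef (invmx K).
Proof.
move=> Ksym Kpd v v0; set w := invmx K *m v.
have vE : v = K *m w by rewrite /w mulmxA mulmxV ?posdef_unitmx // mul1mx.
have w0 : w != 0 by apply: contraNneq v0 => w0; rewrite vE w0 mulmx0.
by rewrite vE trmx_mul Ksym -!mulmxA mulKVmx ?posdef_unitmx // mulmxA Kpd.
Qed.

Lemma posdef_hermitian_gt0 (M : 'M[R]_n) (v : 'rV[R[i]]_n) :
  M^T = M -> posdef M -> v != 0 -> 0 < (v *m map_mx rc M *m v^t*) 0 0.
Proof.
move=> Msym Mpd.
have [a [b ->]] : exists a b, v = map_mx rc a + 'i%C *: map_mx rc b.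
  exists (map_mx (@complex.Re R) v), (map_mx (@complex.Im R) v).
  by apply/matrixP => i j; rewrite !mxE {1}[v i j]complexE.
have -> : (map_mx rc a + 'i%C *: map_mx rc b)^t* = (map_mx rc a - 'i%C *: map_mx rc b)^T.
  rewrite -map_trmx; congr _^T; apply/matrixP => i j.
  rewrite !mxE rmorphD rmorphM /= complexiE conjCi -complexiE mulNr.
  by rewrite !conj_Creal ?complex_real.
have Mcsym : (map_mx rc M)^T = map_mx rc M by rewrite map_trmx Msym.
rewrite symmx_form_split ?Mcsym -?expr2 ?sqr_i // !map_trmx -!map_mxM -map_mxD.
rewrite mxE -(rmorph0 (real_complex R)) ltcR mxE => v0.
have [a0|a0] := eqVneq a 0; last first.
  by rewrite ltr_wpDr ?posdef_row_ge0 ?posdef_row_gt0.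
have b0 : b != 0.
  by apply: contraNneq v0 => b0; rewrite a0 b0 !map_mx0 scaler0 addr0.
by rewrite ltr_wpDl ?posdef_row_ge0 ?posdef_row_gt0.
Qed.

Lemma posdef_trace_form_eq0 (M X : 'M[R]_n) : M^T = M -> posdef M -> X^T = X ->
  \tr (X *m M *m X *m M) = 0 -> X = 0.
Proof.
move=> Msym Mpd Xsym trX0.
set Mc := map_mx rc M; set Xc := map_mx rc X.
have realH (A : 'M[R]_n) : A^T = A -> (map_mx rc A)^t* = map_mx rc A.
  move=> Asym; rewrite map_trmx Asym; apply/matrixP => i j.
  by rewrite !mxE conj_Creal ?complex_real.
have /orthomx_spectralP : Mc \is normalmx by apply/normalmxP; rewrite realH.
have := spectral_unitarymx Mc.
move: (spectralmx Mc) (spectral_diag Mc) => P s Pu.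
have PPt : P *m P^t* = 1%:M by apply/unitarymxP.
have PtP : P^t* *m P = 1%:M by rewrite -invmx_unitary // mulVmx // unitarymx_unit.
rewrite invmx_unitary // => Mce.
have s_gt0 i : 0 < s 0 i.
  have -> : s 0 i = (row i P *m Mc *m (row i P)^t*) 0 0.
    rewrite -row_mul tr_row map_col mulmx_row_col Mce !mulmxA PPt mul1mx.
    by rewrite -mulmxA PPt mulmx1 mxE eqxx mulr1n.
  apply: posdef_hermitian_gt0 => //; apply: contra_neq (@oner_neq0 R[i]) => Pi0.
  have := congr1 (fun A : 'M[R[i]]_n => A i i) PPt.
  by rewrite /= -mulmx_row_col Pi0 mul0mx !mxE eqxx => ->.
have [Y XcE YH] : exists2 Y, Xc = P^t* *m Y *m P & Y^t* = Y.
  exists (P *m Xc *m P^t*); first by rewrite !mulmxA PtP mul1mx -mulmxA PtP mulmx1.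
  by rewrite !trmx_mul !map_mxM trmxCK realH // mulmxA.
have trY0 : \tr (diag_mx s *m Y *m diag_mx s *m Y) = 0.
  have : \tr (Xc *m Mc *m Xc *m Mc) = 0.
    by rewrite -!map_mxM trace_map_mx trX0 rmorph0.
  have conjM A B : P^t* *m A *m P *m (P^t* *m B *m P) = P^t* *m (A *m B) *m P.
    by rewrite -!mulmxA (mulmxA P) PPt mul1mx.
  rewrite XcE Mce !conjM mxtrace_mulC (mulmxA P) PPt mul1mx.
  by rewrite mxtrace_mulC !mulmxA.
have Y0 := hermitian_diag_trace_eq0 s_gt0 YH trY0.
apply/eqP; rewrite -(map_mx_eq0 (real_complex R)) -/Xc XcE Y0.
by rewrite mulmx0 mul0mx.
Qed.

End PositiveDefinite.

Section TracePairing.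
Variables (T : comPzRingType) (n d : nat).

Lemma mxtrace_mulmx_mxvec (K Y : 'M[T]_n) :
  \tr (K *m Y) = (mxvec Y^T *m (mxvec K)^T) 0 0.
Proof.
transitivity (\sum_i \sum_j K i j * Y j i).
  by apply: eq_bigr => i _; rewrite mxE.
rewrite pair_big /= mxE (reindex _ (curry_mxvec_bij _ _)) /=.
by apply: eq_bigr => -[i j] _ /=; rewrite !mxE !mxvecE mxE mulrC.
Qed.

Lemma mxtrace_vec_row (B : 'M[T]_(d, n * n)) (Y : 'M[T]_n) b :
  (mxvec Y^T *m B^T) 0 b = \tr (vec_mx (row b B) *m Y).
Proof.
by rewrite mxtrace_mulmx_mxvec vec_mxK !mxE; apply: eq_bigr => k _; rewrite !mxE.
Qed.

Lemma mxtrace_vec_mulmx (B : 'M[T]_(d, n * n)) (u : 'rV_d) (Y : 'M[T]_n) :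
  \tr (vec_mx (u *m B) *m Y) = \sum_a u 0 a * \tr (vec_mx (row a B) *m Y).
Proof.
rewrite mulmx_sum_row !linear_sum mulmx_suml linear_sum; apply: eq_bigr => a _.
by rewrite linearZ -scalemxAl linearZ.
Qed.

End TracePairing.

Section LinearSpace.
Variables (R : realType) (n d : nat) (B : 'M[R]_(d, n * n)).
Local Notation C := R[i].
Local Notation rc := (real_complex R).
Local Notation Bc := (map_mx rc B).

Lemma inLCP (K : 'M[C]_n) : inLC B K <-> exists u, K = vec_mx (u *m Bc).
Proof.
split; first by case/submxP => u uK; exists u; rewrite -uK mxvecK.
by case=> u ->; rewrite /inLC vec_mxK submxMl.
Qed.

Lemma inLC0 : inLC B (0 : 'M[C]_n).
Proof. by rewrite /inLC linear0 sub0mx. Qed.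

Lemma inLCD (K1 K2 : 'M[C]_n) : inLC B K1 -> inLC B K2 -> inLC B (K1 + K2).
Proof. by rewrite /inLC linearD; apply: addmx_sub. Qed.

Lemma inLC_real (K : 'M[R]_n) : inL B K -> inLC B (map_mx rc K).
Proof. by rewrite /inLC /inL -map_mxvec map_submx. Qed.

Lemma inLC_sym (K : 'M[C]_n) : sym_space B -> inLC B K -> K^T = K.
Proof.
move=> symB /inLCP [u ->]; rewrite mulmx_sum_row !linear_sum; apply: eq_bigr => a _.
rewrite !linearZ /=; congr (_ *: _).
by rewrite -map_row -map_vec_mx map_trmx symB // /inL vec_mxK row_sub.
Qed.

Lemma inLC_trace_eq0 (Y : 'M[C]_n) :
  (forall b, \tr (vec_mx (row b Bc) *m Y) = 0) ->
  forall K, inLC B K -> \tr (K *m Y) = 0.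
Proof.
move=> Y0 K /inLCP [u ->]; rewrite mxtrace_vec_mulmx big1 // => b _.
by rewrite Y0 mulr0.
Qed.

Lemma Lperp0 : Lperp B (0 : 'M[C]_n).
Proof. by split; [rewrite trmx0 | move=> K _; rewrite mulmx0 linear0]. Qed.

Lemma LperpN (S : 'M[C]_n) : Lperp B S -> Lperp B (- S).
Proof.
case=> Ssym SL; split; first by rewrite linearN /= Ssym.
by move=> K LK; rewrite mulmxN linearN /= SL // oppr0.
Qed.

Lemma inLC_horner_evalmx (P : 'M[{poly C}]_n) z :
  (forall j, inLC B (map_mx (coefp j) P)) -> inLC B (map_mx (horner_eval z) P).
Proof.
move=> LP; rewrite /inLC submxE -map_mxvec -[cokermx Bc](horner_evalmx_const z).
rewrite -map_mxM; suff -> : mxvec P *m map_mx polyC (cokermx Bc) = 0 by rewrite map_mx0.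
apply: polymxP => j; rewrite coefmx_mul_const map_mx0 map_mxvec.
by apply/eqP; rewrite -submxE; apply: LP.
Qed.

Lemma Lperp_horner_evalmx (S : 'M[{poly C}]_n) z :
  (forall j, Lperp B (map_mx (coefp j) S)) -> Lperp B (map_mx (horner_eval z) S).
Proof.
move=> perpS; split; first by rewrite map_trmx (polymx_sym (fun j => (perpS j).1)).
move=> K LK; rewrite -[K](horner_evalmx_const z) -map_mxM trace_map_mx.
suff -> : \tr (map_mx polyC K *m S) = 0 by rewrite rmorph0.
by apply/polyP => j; rewrite coef_mxtrace coefmx_const_mul coef0 (perpS j).2.
Qed.

(* The Gram matrix of [(X, Y) |-> tr (X M Y M)] on L is nonsingular, so
   [A |-> M A M] followed by restriction to L reaches every linear form on L. *)
Lemma exists_Lperp_correction (M : 'M[R]_n) :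
  (forall X, inL B X -> \tr (X *m M *m X *m M) = 0 -> X = 0) ->
  forall Q : 'M[C]_n, exists2 A, inLC B A &
    forall K, inLC B K -> \tr (K *m (Q + map_mx rc M *m A *m map_mx rc M)) = 0.
Proof.
move=> M_definite Q.
have trMM (T : comPzRingType) (K X N : 'M[T]_n) :
    \tr (K *m (N *m X *m N)) = \tr (X *m (N *m K *m N)).
  by rewrite mxtrace_mulC -!mulmxA mxtrace_mulC -!mulmxA.
pose H : 'M[R]_d :=
  \matrix_(a, b) \tr (vec_mx (row b B) *m (M *m vec_mx (row a B) *m M)).
have Hrow a : row a H = mxvec ((M *m vec_mx (row a B) *m M)^T) *m B^T.
  by apply/rowP => b; rewrite mxtrace_vec_row !mxE.
have HB : (H <= B^T)%MS by apply/row_subP => a; rewrite Hrow submxMl.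
have kerHB (u : 'rV_d) : u *m H = 0 -> u *m B = 0.
  move=> uH0; have LuB : inL B (vec_mx (u *m B)) by rewrite /inL vec_mxK submxMl.
  have uHE b : (u *m H) 0 b = \tr (vec_mx (row b B) *m (M *m vec_mx (u *m B) *m M)).
    rewrite trMM mxtrace_vec_mulmx !mxE; apply: eq_bigr => a _.
    by rewrite mxE trMM.
  have : \tr (vec_mx (u *m B) *m M *m vec_mx (u *m B) *m M) = 0.
    rewrite -!mulmxA (mulmxA M) mxtrace_vec_mulmx big1 // => b _.
    by rewrite -uHE uH0 mxE mulr0.
  by move/(M_definite _ LuB)/(congr1 mxvec); rewrite vec_mxK linear0.
have BH : (B^T <= H)%MS.
  have rkBH : (\rank B <= \rank H)%N.
    have : (kermx H <= kermx B)%MS.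
      apply/sub_kermxP/row_matrixP => i; rewrite row_mul row0; apply: kerHB.
      by rewrite -row_mul mulmx_ker row0.
    by move/mxrankS; rewrite !mxrank_ker leq_sub2lE ?rank_leq_row.
  by rewrite -(mxrank_leqif_sup HB).2 eqn_leq (mxrankS HB) mxrank_tr rkBH.
have : (mxvec Q^T *m Bc^T <= map_mx rc H)%MS.
  by apply: submx_trans (submxMl _ _) _; rewrite map_trmx map_submx.
case/submxP => w wH; exists (vec_mx (- w *m Bc)); first by apply/inLCP; exists (- w).
apply: inLC_trace_eq0 => b; rewrite mulmxDr mxtraceD trMM mxtrace_vec_mulmx.
rewrite -mxtrace_vec_row wH mxE -big_split big1 // => a _ /=.
rewrite !mxE mulNr -!map_row -!map_vec_mx -!map_mxM trace_map_mx trMM.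
by rewrite subrr.
Qed.

End LinearSpace.

Section Lifting.
Variables (R : realType) (n d : nat) (B : 'M[R]_(d, n * n)).
Hypothesis symB : sym_space B.
Variables (K0 : 'M[R]_n) (S0 : 'M[R[i]]_n).
Hypotheses (LK0 : inL B K0) (K0pd : posdef K0) (S0sym : S0^T = S0).

Local Notation C := R[i].
Local Notation rc := (real_complex R).
Local Notation coefmx j := (map_mx (coefp j)).
Local Notation constmx := (map_mx polyC).
Local Notation M := (invmx K0).
Local Notation K0c := (map_mx rc K0).
Local Notation Mc := (map_mx rc M).

Let K0sym : K0^T = K0. Proof. exact: symB. Qed.

Let Mcsym : Mc^T = Mc.
Proof. by rewrite map_trmx trmx_inv K0sym. Qed.

Let K0cMc : K0c *m Mc = 1%:M.
Proof. by rewrite -map_mxM mulmxV ?posdef_unitmx // map_mx1. Qed.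

Lemma exists_Lperp_correction_inv (Q : 'M[C]_n) : exists2 A, inLC B A &
  forall K, inLC B K -> \tr (K *m (Q + Mc *m A *m Mc)) = 0.
Proof.
apply: exists_Lperp_correction => X LX.
apply: posdef_trace_form_eq0; [by rewrite trmx_inv K0sym | | exact: symB].
exact: posdef_invmx.
Qed.

Definition Sline : 'M[{poly C}]_n := constmx Mc + 'X *: constmx (S0 - Mc).

Lemma Sline_sym : Sline^T = Sline.
Proof.
by rewrite /Sline linearD linearZ /= !map_trmx linearB /= map_trmx trmx_inv K0sym S0sym.
Qed.

(* Truncations of the power series of the ML solution along [Sline] near
   [t = 0]: [P] is the concentration matrix in L and [Sg] its inverse. *)
Record approx_inverse m (P Sg : 'M[{poly C}]_n) : Prop := ApproxInverse {
  approx_inL : forall j, inLC B (coefmx j P);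
  approx_sym : Sg^T = Sg;
  approx_P0 : coefmx 0 P = K0c;
  approx_Sg0 : coefmx 0 Sg = Mc;
  approx_mul : dvdpmx 'X^m (P *m Sg - 1%:M);
  approx_perp : forall j, (j < m)%N -> Lperp B (coefmx j (Sline - Sg)) }.

Lemma approx_inverse1 : approx_inverse 1 (constmx K0c) (constmx Mc).
Proof.
split.
- by move=> j; rewrite coefmx_const; case: eqP => _; [apply: inLC_real | apply: inLC0].
- by rewrite map_trmx Mcsym.
- exact: coefmx0_const.
- exact: coefmx0_const.
- by rewrite -map_mxM K0cMc map_mx1 subrr; apply: dvdpmx0.
- case=> // _; rewrite /Sline addrAC subrr add0r -(expr1 'X) coefmx_XnZ /=.
  exact: Lperp0.
Qed.

Lemma approx_inverse_err_sym m P Sg F : approx_inverse m P Sg ->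
  P *m Sg - 1%:M = 'X^m *: F -> (Mc *m coefmx 0 F)^T = Mc *m coefmx 0 F.
Proof.
case=> LP Sgsym _ Sg0 _ _ PSgF.
have Psym : P^T = P by apply: polymx_sym => j; exact: inLC_sym symB (LP j).
have : 'X^m *: (Sg *m F) = 'X^m *: (F^T *m Sg).
  have PSgFT : 'X^m *: F^T = (P *m Sg - 1%:M)^T by rewrite PSgF linearZ.
  rewrite scalemxAr -PSgF [RHS]scalemxAl PSgFT.
  rewrite mulmxBr mulmx1 linearB /= trmx_mul Psym Sgsym trmx1 mulmxBl mul1mx.
  by rewrite mulmxA.
move/eqP; rewrite -subr_eq0 -scalerBr scalemx_eq0 expf_eq0 polyX_eq0 andbF /=.
rewrite subr_eq0 => /eqP/(congr1 (map_mx (coefp 0))).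
by rewrite !map_mxM Sg0 trmx_mul Mcsym -map_trmx => ->.
Qed.

Lemma approx_inverse_succ m P Sg : (0 < m)%N -> approx_inverse m P Sg ->
  exists P' Sg', approx_inverse m.+1 P' Sg'.
Proof.
move=> m_gt0 PSg; case: (PSg) => LP Sgsym P0 Sg0 PSg1 perpSg.
have PSgF := dvdpmx_divp PSg1.
set F := map_mx _ _ in PSgF; set E := coefmx 0 F.
have MEsym : (Mc *m E)^T = Mc *m E := approx_inverse_err_sym PSg PSgF.
have [A LA Aperp] := exists_Lperp_correction_inv (coefmx m (Sline - Sg) + Mc *m E).
have MAMsym : (Mc *m A *m Mc)^T = Mc *m A *m Mc.
  by rewrite !trmx_mul (inLC_sym symB LA) Mcsym mulmxA.
move Gdef : (- (Mc *m E) - Mc *m A *m Mc) => G.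
have coefmx_XnZ0 (Q : 'M[C]_n) : coefmx 0 ('X^m *: constmx Q) = 0.
  by rewrite coefmx_XnZ m_gt0.
exists (P + 'X^m *: constmx A), (Sg + 'X^m *: constmx G); split.
- move=> j; rewrite map_mxD coefmx_XnZ; case: ifP => _; first by rewrite addr0 LP.
  apply: inLCD (LP j) _; rewrite coefmx_const.
  by case: eqP => _; [exact: LA | exact: inLC0].
- by rewrite linearD linearZ /= map_trmx -Gdef linearB linearN /= MEsym MAMsym Sgsym.
- by rewrite map_mxD coefmx_XnZ0 addr0.
- by rewrite map_mxD coefmx_XnZ0 addr0.
- have -> : (P + 'X^m *: constmx A) *m (Sg + 'X^m *: constmx G) - 1%:M =
      'X^m *: (F + P *m constmx G + constmx A *m Sg) +
      ('X^m * 'X^m) *: (constmx A *m constmx G).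
    rewrite mulmxDl !mulmxDr -!scalemxAl -!scalemxAr scalerA addrAC.
    by rewrite [X in X + _]addrAC PSgF addrA !scalerDr.
  apply: dvdpmxD.
    rewrite exprSr; apply: dvdpmx_scale; apply/dvdpmxXP.
    rewrite !map_mxD !map_mxM !coefmx0_const -/E Sg0 P0 -Gdef mulmxBr mulmxN !mulmxA.
    by rewrite K0cMc !mul1mx addrA subrr sub0r addNr.
  apply: dvdpmx_trans (dvdpmx_scalel _ _); rewrite -exprD dvdp_exp2l //.
  by rewrite -{1}(addn0 m) ltn_add2l.
- move=> j; rewrite ltnS leq_eqVlt => /orP [/eqP ->|jm].
    rewrite opprD addrA map_mxB coefmx_XnZ ltnn subnn coefmx0_const.
    have -> : coefmx m (Sline - Sg) - G =
              coefmx m (Sline - Sg) + Mc *m E + Mc *m A *m Mc.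
      by rewrite -Gdef opprB opprK addrA addrAC.
    split; last exact: Aperp.
    by rewrite !linearD /= MEsym MAMsym map_trmx linearB /= Sline_sym Sgsym.
  by rewrite opprD addrA map_mxB coefmx_XnZ jm subr0; apply: perpSg.
Qed.

Lemma approx_inverse_exists m : (0 < m)%N -> exists P Sg, approx_inverse m P Sg.
Proof.
elim: m => // -[_ _ | m IHm _].
  by exists (constmx K0c), (constmx Mc); exact: approx_inverse1.
by have [P [Sg PSg]] := IHm isT; apply: approx_inverse_succ PSg.
Qed.

Variable p : {mpoly C[n * n]}.
Hypotheses (pS0 : mx_eval p S0 != 0)
  (p_noML : forall S, S^T = S -> mx_eval p S != 0 -> forall X, ~ ML_set B S X).

Local Notation heval t Q :=
  (mhomog_eval (polyC : {rmorphism C -> {poly C}}) (msize p) p t (fun k => mxvec Q 0 k)).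

Lemma mx_eval_ML_eq0 (K S : 'M[C]_n) :
  inLC B K -> K \in unitmx -> Lperp B S -> mx_eval p (invmx K + S) = 0.
Proof.
move=> LK Kunit perpS; have [//|pKS] := eqVneq (mx_eval p (invmx K + S)) 0.
have KSsym : (invmx K + S)^T = invmx K + S.
  by rewrite linearD /= trmx_inv (inLC_sym symB LK) perpS.1.
case: (p_noML KSsym pKS (X := invmx K)); split.
  by move=> q q0; apply: q0; exists K.
by exists (- S); split; [exact: LperpN | rewrite addrCA addNr addr0].
Qed.

Lemma horner_heval t (Q : 'M[{poly C}]_n) z : (heval t Q).[z] =
  mhomog_eval (idfun : {rmorphism C -> C}) (msize p) p t.[z]
    (fun k => mxvec (map_mx (horner_eval z) Q) 0 k).
Proof.
rewrite horner_mhomog_eval; apply: eq_mhomog_eval => k.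
by rewrite -map_mxvec mxE.
Qed.

Lemma heval_Sline_neq0 : heval 1 Sline != 0.
Proof.
apply: contra_neq pS0 => g0.
have Sline1 : map_mx (horner_eval 1) Sline = S0.
  rewrite map_mxD horner_evalmxZ !horner_evalmx_const hornerX scale1r.
  by rewrite addrC subrK.
by rewrite -[RHS](horner0 1) -g0 horner_heval hornerC mhomog_eval1 Sline1.
Qed.

Lemma approx_det_root0 m P Sg : approx_inverse m P Sg -> ~~ root (\det P) 0.
Proof.
move=> PSg; rewrite /root horner_coef0 -[_`_0]/(coefp 0 _) -det_map_mx (approx_P0 PSg).
by rewrite det_map_mx fmorph_eq0 -unitfE -unitmxE posdef_unitmx.
Qed.

Lemma approx_adj_cong m P Sg : approx_inverse m P Sg ->
  congp 'X^m (heval (\det P) (\adj P + \det P *: map_mx (take_poly m) (Sline - Sg)))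
             (\det P ^+ msize p * heval 1 Sline).
Proof.
move=> PSg; set D := \det P; set Sig := map_mx (take_poly m) (Sline - Sg).
rewrite -mhomog_eval_scale //; apply: congp_mhomog_eval => k; rewrite /congp.
have -> : mxvec (\adj P + D *: Sig) 0 k - D * mxvec Sline 0 k =
          mxvec (\adj P + D *: Sig - D *: Sline) 0 k by rewrite linearB linearZ /= !mxE.
apply: dvdpmx_mxvec.
have -> : \adj P + D *: Sig - D *: Sline =
          - (\adj P *m (P *m Sg - 1%:M)) - D *: (Sline - Sg - Sig).
  rewrite mulmxBr mulmxA mul_adj_mx mul_scalar_mx mulmx1 -/D.
  move: (\adj P) Sline Sig => Y S1 S2.
  by apply/matrixP => a b; rewrite !mxE; ring.
apply: dvdpmxD; apply: dvdpmxN; first exact/dvdpmx_mull/(approx_mul PSg).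
exact/dvdpmxZ/dvdpmx_take_poly.
Qed.

Lemma approx_adj_heval_eq0 m P Sg : approx_inverse m P Sg ->
  heval (\det P) (\adj P + \det P *: map_mx (take_poly m) (Sline - Sg)) = 0.
Proof.
move=> PSg; set D := \det P; set Sig := map_mx (take_poly m) (Sline - Sg).
have D0 : D != 0.
  by apply: contraNneq (approx_det_root0 PSg); rewrite -/D => ->; exact: root0.
suff: heval D (\adj P + D *: Sig) * D = 0.
  by move/eqP; rewrite mulf_eq0 (negPf D0) orbF => /eqP.
apply: poly_horner_eq0 => z; rewrite hornerM horner_heval.
have [->|Dz0] := eqVneq D.[z] 0; first by rewrite mulr0.
set Pz := map_mx (horner_eval z) P.
have detPz : \det Pz = D.[z] by rewrite det_map_mx.
have Pz_unit : Pz \in unitmx by rewrite unitmxE detPz unitfE.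
have Sig_perp j : Lperp B (map_mx (coefp j) Sig).
  by rewrite coefmx_take_poly; case: ifP => [/(approx_perp PSg)//|_]; exact: Lperp0.
have -> : map_mx (horner_eval z) (\adj P + D *: Sig) =
          D.[z] *: (invmx Pz + map_mx (horner_eval z) Sig).
  rewrite map_mxD horner_evalmxZ map_mx_adj -/Pz scalerDr; congr (_ + _).
  by rewrite /invmx Pz_unit scalerA detPz mulfV // scale1r.
under eq_mhomog_eval => k do rewrite linearZ mxE.
rewrite mhomog_eval_scale // mhomog_eval1.
rewrite -/(mx_eval p (invmx Pz + map_mx (horner_eval z) Sig)).
rewrite mx_eval_ML_eq0 ?mulr0 ?mul0r //.
  exact/inLC_horner_evalmx/(approx_inL PSg).
exact: Lperp_horner_evalmx.
Qed.

Lemma ML_degree0_absurd : False.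
Proof.
have g0 := heval_Sline_neq0; set m := size (heval 1 Sline).
have m_gt0 : (0 < m)%N by rewrite lt0n size_poly_eq0.
have [P [Sg PSg]] := approx_inverse_exists m_gt0.
have := approx_adj_cong PSg; rewrite /congp approx_adj_heval_eq0 // sub0r dvdpNr.
rewrite Gauss_dvdpr; last first.
  apply/coprimep_expr/coprimep_expl.
  by rewrite coprimep_sym coprimepX (approx_det_root0 PSg).
by move/(dvdp_leq g0); rewrite size_polyXn ltnn.
Qed.

End Lifting.

Theorem corollary6p2 (R : realType) (n d : nat) (B : 'M[R]_(d, n * n)) :
  sym_space B -> regular B -> ML_degree_is B 0 ->
  forall K : 'M[R]_n, inL B K -> ~ posdef K.
Proof.
move=> symB _ [p [[S0 [S0sym pS0]] generic]] K LK Kpd.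
apply: (ML_degree0_absurd symB LK Kpd S0sym pS0) => S Ssym pS X MLX.
have [s [_ /size0nil s0 sX]] := generic S Ssym pS.
by have := (sX X).1 MLX; rewrite s0.
Qed.
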